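(* Let $2\le k<n$ and let $\{\mathcal{V}^I\}_I$ be a maximal set of pairwise compatible one-parameter arrays of type $(k,n)$ (a maximal clique), defining the facet $\mathcal{M}=\sum_I\alpha^I\mathcal{V}^I$, $\alpha^I>0$. For each $I$ let $\mathcal{V}^{*I}$ be the one-parameter array of type $(n-k,n)$ dual to $\mathcal{V}^I$. Then $\{\mathcal{V}^{*I}\}_I$ is a maximal set of pairwise compatible one-parameter arrays of type $(n-k,n)$ (a clique), and hence $\mathcal{M}^*:=\sum_I\alpha^I\mathcal{V}^{*I}$, $\alpha^I>0$, is a facet of type $(n-k,n)$, the dual facet of $\mathcal{M}$.
   Context: Labels carry the cyclic order $1<\cdots<n$. A planar Feynman diagram on a label set $L$ is a tree with leaves labelled by $L$, internal vertices of degree at least 3, planar for the induced cyclic order, with nonnegative internal edge lengths, giving a tree metric $d_{ab}$. For a label set $N$, $|N|=n$, $2\le k<n$, an array of type $(k,n)$ assigns to each $(k-2)$-subset $\{i_1,\ldots,i_{k-2}\}\subseteq N$ a planar Feynman diagram $\mathcal{V}_{i_1\ldots i_{k-2}}$ on $N\setminus\{i_1,\ldots,i_{k-2}\}$ with metric $d^{(i_1\ldots i_{k-2})}_{ab}$, such that $\pi_{i_1\ldots i_k}:=d^{(i_1\ldots i_{k-2})}_{i_{k-1}i_k}$ is totally symmetric. Metrics are considered modulo $\pi_I\sim\pi_I+\sum_{i\in I}w_i$. A one-parameter array has metric $xV$ for a fixed tensor $V$ and one parameter $x>0$. Two one-parameter arrays with tensors $V,W$ are compatible if for all $x,y>0$,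 $xV+yW$ is, up to $\sim$, the metric of an array of the same type. Sums of compatible arrays are taken at the level of metrics ($\sum_I\alpha^I V^I$); a facet is the array family obtained as such a positive sum over a maximal set of pairwise compatible one-parameter arrays. Kinematic invariants of type $(k,n)$ are reals $s_J$ for $k$-subsets $J\subseteq N$ with $\sum_{J\ni j}s_J=0$ for all $j$; for a one-parameter array with tensor $V$, $\mathcal{F}(\mathcal{V}):=\sum_{|J|=k}s_JV_J$. A one-parameter array $\mathcal{V}^*$ of type $(n-k,n)$ is dual to a one-parameter array $\mathcal{V}$ of type $(k,n)$ if $\mathcal{F}(\mathcal{V})=\mathcal{F}(\mathcal{V}^* )$ as functions on kinematic space under the identification $s_J\leftrightarrow s_{N\setminus J}$. *)

From HB Require Import structures.
From mathcomp Require Import all_boot all_order all_algebra.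
From mathcomp Require Import reals.
Set Implicit Arguments. Unset Strict Implicit. Unset Printing Implicit Defensive.
Import Order.TTheory GRing.Theory Num.Theory.
Local Open Scope ring_scope.

(* Labels are 'I_n = {0,...,n-1} with the cyclic order 0 < 1 < ... < n-1.
   A tensor of type (k,n) is a function on subsets of labels; only its values
   on k-subsets are ever used. *)

Section Arrays.
Variables (R : realType) (n : nat).

Definition tensor := {set 'I_n} -> R.

(* A (nontrivial) split A | L\A of the label set L is planar iff A is a cyclic
   interval of L for the induced cyclic order, i.e. A and L\A do not interleave. *)
Definition planar_split (L A : {set 'I_n}) : bool :=
  ~~ [exists a : 'I_n, exists b : 'I_n, exists c : 'I_n, exists d : 'I_n,
       [&& (a < b)%N, (b < c)%N, (c < d)%N,
           [&& a \in L, b \in L, c \in L & d \in L] &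
           [|| [&& a \in A, b \notin A, c \in A & d \notin A]
             | [&& a \notin A, b \in A, c \notin A & d \in A]]]].

(* Two splits of L are compatible (can be edges of a common tree). *)
Definition compatible_splits (L A B : {set 'I_n}) : bool :=
  [|| A :&: B == set0, A :\: B == set0, B :\: A == set0 | L :\: (A :|: B) == set0].

(* A planar Feynman diagram on L, described by its internal edges: each
   internal edge is recorded by the split (one side A of the bipartition of L
   it induces) together with its length.  Internal edges give nontrivial
   splits, planarity means every split is a cyclic interval, and edges of a
   tree give pairwise compatible splits. *)
Definition valid_diagram (L : {set 'I_n}) (E : seq ({set 'I_n} * R)) : Prop :=
  (forall e, e \in E ->
     [/\ e.1 \subset L, (2 <= #|e.1|)%N, (2 <= #|L :\: e.1|)%N,
         planar_split L e.1 & 0 <= e.2]) /\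
  (forall e f, e \in E -> f \in E -> compatible_splits L e.1 f.1).

(* Tree metric: sum of lengths of the edges on the path from a to b; leaf
   edges have lengths given by lf. *)
Definition tree_metric (E : seq ({set 'I_n} * R)) (lf : 'I_n -> R)
  (a b : 'I_n) : R :=
  if a == b then 0 else
  lf a + lf b + \sum_(e <- E) (if (a \in e.1) != (b \in e.1) then e.2 else 0).

Definition planar_diagram_metric (L : {set 'I_n}) (d : 'I_n -> 'I_n -> R) : Prop :=
  exists E lf, valid_diagram L E /\
    forall a b, a \in L -> b \in L -> a != b -> d a b = tree_metric E lf a b.

(* pi is the metric of an array of type (k,n): for every (k-2)-subset S, a planar
   Feynman diagram on N \ S with metric D S, and pi_{S u {a,b}} = (D S) a b,
   which encodes total symmetry. *)
Definition is_array (k : nat) (pi : tensor) : Prop :=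
  (2 <= k < n)%N /\
  exists D : {set 'I_n} -> 'I_n -> 'I_n -> R,
    (forall S : {set 'I_n}, #|S| = (k - 2)%N -> planar_diagram_metric (~: S) (D S)) /\
    (forall (S : {set 'I_n}) (a b : 'I_n), #|S| = (k - 2)%N ->
        a \notin S -> b \notin S -> a != b -> pi (a |: (b |: S)) = D S a b).

Definition array_equiv (k : nat) (pi pi' : tensor) : Prop :=
  exists w : 'I_n -> R, forall J : {set 'I_n}, #|J| = k ->
    pi' J = pi J + \sum_(i in J) w i.

Definition one_param (k : nat) (V : tensor) : Prop :=
  forall x : R, 0 < x -> is_array k (fun J => x * V J).

Definition compatible_arrays (k : nat) (V W : tensor) : Prop :=
  forall x y : R, 0 < x -> 0 < y ->
    exists pi, is_array k pi /\ array_equiv k (fun J => x * V J + y * W J) pi.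

Definition clique (k : nat) (C : tensor -> Prop) : Prop :=
  (forall V, C V -> one_param k V) /\
  (forall V W, C V -> C W -> compatible_arrays k V W).

Definition max_clique (k : nat) (C : tensor -> Prop) : Prop :=
  clique k C /\
  forall C' : tensor -> Prop, clique k C' -> (forall V, C V -> C' V) ->
    forall V, C' V -> C V.

Definition kinematic (k : nat) (s : tensor) : Prop :=
  forall j : 'I_n, \sum_(J : {set 'I_n} | (#|J| == k) && (j \in J)) s J = 0.

Definition dual_array (k : nat) (V W : tensor) : Prop :=
  forall s : tensor, kinematic k s ->
    \sum_(J : {set 'I_n} | #|J| == k) s J * V J =
    \sum_(K : {set 'I_n} | #|K| == (n - k)%N) s (~: K) * W K.

End Arrays.

From HB Require Import structures.
From mathcomp Require Import all_boot all_order all_algebra.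
From mathcomp Require Import reals.
From mathcomp Require Import ring lra zify.
Set Implicit Arguments. Unset Strict Implicit. Unset Printing Implicit Defensive.
Import Order.TTheory GRing.Theory Num.Theory.
Local Open Scope ring_scope.

(** A metric on cyclically ordered labels is the metric of a planar Feynman
    diagram iff it satisfies the planar four-point condition
    [d p r + d q s = max (d p q + d r s) (d p s + d q r)] for [p < q < r < s]:
    a tree metric satisfies it edge by edge, and conversely the mixed second
    differences of [d] along the cycle are nonnegative weights of pairwise
    non-crossing cyclic intervals, from which the tree is rebuilt.  The
    condition is invariant under exchanging each pair of a quartet with the
    complementary pair, so [K |-> pi (N \ K)] maps arrays of type (k,n) to
    arrays of type (n-k,n).  Duality of one-parameter arrays [V], [W] says
    that [V - W (N \ _)] is orthogonal to kinematic space, i.e. is a sum of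
    shifts [w_i]; so complementation identifies [V] and [W] up to [~],
    carries compatible pairs to compatible pairs in both directions, and the
    maximality of the clique transfers. *)

Definition four_point (T : Type) (R : realDomainType) (d : T -> T -> R) (p q r s : T) :=
  d p r + d q s = Num.max (d p q + d r s) (d p s + d q r).

Lemma eq_maxrP (R : realDomainType) (x y z : R) :
  x = Num.max y z <-> [/\ y <= x, z <= x & x = y \/ x = z].
Proof.
split=> [->|[yx zx [] <-]].
- by rewrite !le_max !lexx orbT maxEle; split=> //; case: ifP; [right | left].
- by rewrite max_l.
- by rewrite max_r.
Qed.

Lemma ord_ltn_neq n (x y : 'I_n) : (x < y)%N -> x != y.
Proof. by move=> xy; rewrite neq_ltn xy. Qed.

Section TreeMetricFourPoint.
Variables (R : realType) (n : nat).
Implicit Types (L A B : {set 'I_n}) (p q r s : 'I_n) (e : {set 'I_n} * R).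
Implicit Types (E : seq ({set 'I_n} * R)) (lf : 'I_n -> R).

Definition edge_dist e (a b : 'I_n) : R := if (a \in e.1) != (b \in e.1) then e.2 else 0.

Definition splits_quartet A p q r s : bool :=
  [&& (p \in A) == (q \in A), (r \in A) == (s \in A) & (p \in A) != (r \in A)].

Definition quartet_weight E p q r s : R :=
  \sum_(e <- E | splits_quartet e.1 p q r s) e.2.

Lemma planar_split_not_alternating L A p q r s :
  planar_split L A -> (p < q)%N -> (q < r)%N -> (r < s)%N ->
  p \in L -> q \in L -> r \in L -> s \in L ->
  ~~ [&& p \in A, q \notin A, r \in A & s \notin A] /\
  ~~ [&& p \notin A, q \in A, r \notin A & s \in A].
Proof.
move=> /existsPn planar pq qr rs pL qL rL sL.
move: (planar p) => /existsPn /(_ q) /existsPn /(_ r) /existsPn /(_ s).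
by rewrite pq qr rs pL qL rL sL /= negb_or => /andP.
Qed.

Lemma edge_dist_quartet L e p q r s :
  planar_split L e.1 -> (p < q)%N -> (q < r)%N -> (r < s)%N ->
  p \in L -> q \in L -> r \in L -> s \in L ->
  edge_dist e p r + edge_dist e q s =
    edge_dist e p q + edge_dist e r s + (if splits_quartet e.1 p q r s then 2 * e.2 else 0) /\
  edge_dist e p r + edge_dist e q s =
    edge_dist e p s + edge_dist e q r + (if splits_quartet e.1 q r s p then 2 * e.2 else 0).
Proof.
move=> planar pq qr rs pL qL rL sL.
have [] := planar_split_not_alternating planar pq qr rs pL qL rL sL.
rewrite /edge_dist /splits_quartet.
by case: (p \in e.1); case: (q \in e.1); case: (r \in e.1); case: (s \in e.1) => //= _ _;
  split; ring.
Qed.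

Lemma compatible_splits_quadrant L A B : compatible_splits L A B ->
  exists a b : bool, forall x, x \in L -> ~~ [&& (x \in A) == a & (x \in B) == b].
Proof.
have emptyP (X : {set 'I_n}) x : X == set0 -> x \notin X by move=> /eqP ->; rewrite inE.
case/or4P => /emptyP X0; [exists true, true | exists true, false
  | exists false, true | exists false, false] => x xL; move: (X0 x); rewrite !inE ?xL;
  by case: (x \in A); case: (x \in B).
Qed.

Lemma compatible_splits_quartets L A B p q r s : compatible_splits L A B ->
  p \in L -> q \in L -> r \in L -> s \in L ->
  ~~ (splits_quartet A p q r s && splits_quartet B q r s p).
Proof.
move=> /compatible_splits_quadrant [a [b empty]] pL qL rL sL.
move: (empty p pL) (empty q qL) (empty r rL) (empty s sL) => {empty}.
rewrite /splits_quartet.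
by case: a; case: b; case: (p \in A); case: (q \in A); case: (r \in A); case: (s \in A);
  case: (p \in B); case: (q \in B); case: (r \in B); case: (s \in B).
Qed.

Lemma tree_metricE E lf (a b : 'I_n) : a != b ->
  tree_metric E lf a b = lf a + lf b + \sum_(e <- E) edge_dist e a b.
Proof. by rewrite /tree_metric => /negbTE ->. Qed.

Section Quartets.
Variables (L : {set 'I_n}) (E : seq ({set 'I_n} * R)) (lf : 'I_n -> R) (p q r s : 'I_n).
Hypotheses (pq : (p < q)%N) (qr : (q < r)%N) (rs : (r < s)%N).
Hypotheses (pL : p \in L) (qL : q \in L) (rL : r \in L) (sL : s \in L).

Lemma tree_metric_quartet : {in E, forall e, planar_split L e.1} ->
  let d := tree_metric E lf in
  d p r + d q s = d p q + d r s + 2 * quartet_weight E p q r s /\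
  d p r + d q s = d p s + d q r + 2 * quartet_weight E q r s p.
Proof.
move=> planarE /=.
have sum_gap (x y z w : 'I_n) (P : pred ({set 'I_n} * R)) :
    {in E, forall e, edge_dist e p r + edge_dist e q s =
       edge_dist e x y + edge_dist e z w + (if P e then 2 * e.2 else 0)} ->
    \sum_(e <- E) edge_dist e p r + \sum_(e <- E) edge_dist e q s =
    \sum_(e <- E) edge_dist e x y + \sum_(e <- E) edge_dist e z w +
      2 * \sum_(e <- E | P e) e.2.
  move=> per_edge; rewrite mulr_sumr (big_mkcond P) -!big_split /=.
  by rewrite !big_seq; apply: eq_bigr => e eE; rewrite per_edge // fun_if mulr0.
have pr := ltn_trans pq qr; have qs := ltn_trans qr rs; have ps := ltn_trans pr rs.
rewrite !tree_metricE ?ord_ltn_neq //.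
have := sum_gap _ _ _ _ _ (fun e eE =>
  (edge_dist_quartet (planarE e eE) pq qr rs pL qL rL sL).1).
have := sum_gap _ _ _ _ _ (fun e eE =>
  (edge_dist_quartet (planarE e eE) pq qr rs pL qL rL sL).2).
by rewrite /quartet_weight; split; lra.
Qed.

Lemma four_point_quartet_weight : {in E, forall e, planar_split L e.1} ->
  four_point (tree_metric E lf) p q r s ->
  quartet_weight E p q r s = 0 \/ quartet_weight E q r s p = 0.
Proof.
move=> /tree_metric_quartet [gapA gapB] /eq_maxrP [_ _ [] eqX];
  [left | right]; lra.
Qed.

End Quartets.

Lemma quartet_weight_ge0 E p q r s :
  {in E, forall e, 0 <= e.2} -> 0 <= quartet_weight E p q r s.
Proof.
move=> nonnegE; rewrite /quartet_weight big_seq_cond.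
by apply: sumr_ge0 => e /andP [eE _]; apply: nonnegE.
Qed.

Lemma quartet_weight_ge_edge E e p q r s :
  {in E, forall e, 0 <= e.2} -> e \in E -> splits_quartet e.1 p q r s ->
  e.2 <= quartet_weight E p q r s.
Proof.
move=> + eE; case/splitPr: eE => E1 E2 nonnegE split_e.
have ge0 E' : {subset E' <= E1 ++ e :: E2} -> 0 <= quartet_weight E' p q r s.
  by move=> sub; apply: quartet_weight_ge0 => e' /sub /nonnegE.
have := ge0 E1 (fun x xE => ltac:(by rewrite mem_cat xE)).
have := ge0 E2 (fun x xE => ltac:(by rewrite mem_cat inE xE !orbT)).
by rewrite /quartet_weight big_cat big_cons /= split_e; lra.
Qed.

Lemma quartet_weight_eq0 L E p q r s :
  {in E &, forall e f, compatible_splits L e.1 f.1} ->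
  p \in L -> q \in L -> r \in L -> s \in L ->
  quartet_weight E p q r s = 0 \/ quartet_weight E q r s p = 0.
Proof.
move=> compat pL qL rL sL; rewrite /quartet_weight.
have [/hasP [e eE eA] | /hasPn noA] := boolP (has (fun e => splits_quartet e.1 p q r s) E).
  right; rewrite big_seq_cond big1 // => f /andP [fE fB].
  by have /negP[] := compatible_splits_quartets (compat e f eE fE) pL qL rL sL; apply/andP.
by left; rewrite big_seq_cond big1 // => e /andP [/noA /negbTE ->].
Qed.

Lemma tree_metric_four_point L E lf p q r s : valid_diagram L E ->
  (p < q)%N -> (q < r)%N -> (r < s)%N -> p \in L -> q \in L -> r \in L -> s \in L ->
  four_point (tree_metric E lf) p q r s.
Proof.
move=> [edges compat] pq qr rs pL qL rL sL; apply/eq_maxrP.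
have planarE : {in E, forall e, planar_split L e.1} by move=> e /edges [].
have nonnegE : {in E, forall e, 0 <= e.2} by move=> e /edges [].
have [gapA gapB] := tree_metric_quartet lf pq qr rs pL qL rL sL planarE.
have geA := quartet_weight_ge0 p q r s nonnegE; have geB := quartet_weight_ge0 q r s p nonnegE.
have eq0 := quartet_weight_eq0 compat pL qL rL sL.
by split; [lra | lra | case: eq0 => ?; [left | right]; lra].
Qed.

Lemma planar_diagram_metric_four_point L (d : 'I_n -> 'I_n -> R) p q r s :
  planar_diagram_metric L d ->
  (p < q)%N -> (q < r)%N -> (r < s)%N -> p \in L -> q \in L -> r \in L -> s \in L ->
  four_point d p q r s.
Proof.
move=> [E [lf [validE dE]]] pq qr rs pL qL rL sL.
have pr := ltn_trans pq qr; have qs := ltn_trans qr rs; have ps := ltn_trans pr rs.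
have := tree_metric_four_point lf validE pq qr rs pL qL rL sL.
by rewrite /four_point !dE ?ord_ltn_neq.
Qed.

End TreeMetricFourPoint.

Definition mixed_diff (V : zmodType) (g : nat -> nat -> V) (i j : nat) : V :=
  (g i.+1 j.+1 - g i j.+1) - (g i.+1 j - g i j).

Lemma sum_mixed_diff (V : zmodType) (g : nat -> nat -> V) lo1 hi1 lo2 hi2 :
  (lo1 <= hi1)%N -> (lo2 <= hi2)%N ->
  \sum_(lo1 <= i < hi1) \sum_(lo2 <= j < hi2) mixed_diff g i j =
  (g hi1 hi2 - g hi1 lo2) - (g lo1 hi2 - g lo1 lo2).
Proof.
move=> le1 le2; apply: (telescope_sumr_eq (fun i => g i hi2 - g i lo2)) => // i _.
rewrite (telescope_sumr_eq (fun j => g i.+1 j - g i j)) //.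
by rewrite !opprB !addrA -!(addrAC _ (g i lo2)) addrAC.
Qed.

Lemma sum_nat_mask (V : nmodType) (N lo hi : nat) (F : nat -> V) : (hi <= N)%N ->
  \sum_(lo <= j < hi) F j = \sum_(0 <= j < N) (if (lo <= j < hi)%N then F j else 0).
Proof.
move=> hiN; rewrite -big_mkcond (big_nat_widen _ _ _ _ _ hiN) (big_nat_widenl _ _ _ _ _ (leq0n lo)).
by apply: eq_bigl => j; rewrite andbC.
Qed.

Section SumPairs.
Variables (R : realType) (m : nat).
Implicit Types G : nat -> nat -> R.

Definition sum_pairs (G : nat -> nat -> R) : R := \sum_(0 <= i < m) \sum_(i.+1 <= j < m) G i j.

Definition in_arc (i j x : nat) : bool := (i < x <= j)%N.

Definition arc_separates (i j a b : nat) : bool := in_arc i j a != in_arc i j b.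

Lemma sum_pairsE G : sum_pairs G =
  \sum_(0 <= i < m) \sum_(0 <= j < m) (if (i < j)%N then G i j else 0).
Proof.
rewrite /sum_pairs; apply: eq_big_nat => i /andP [_ im].
rewrite (@sum_nat_mask R _ _ _ _ (leqnn m)).
by apply: eq_big_nat => j /andP [_ jm]; rewrite jm andbT.
Qed.

Lemma sum_rectE G lo1 hi1 lo2 hi2 : (hi1 <= m)%N -> (hi2 <= m)%N ->
  \sum_(lo1 <= i < hi1) \sum_(lo2 <= j < hi2) G i j =
  \sum_(0 <= i < m) \sum_(0 <= j < m)
    (if (lo1 <= i < hi1)%N && (lo2 <= j < hi2)%N then G i j else 0).
Proof.
move=> hi1m hi2m; rewrite (@sum_nat_mask R _ _ _ _ hi1m); apply: eq_bigr => i _.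
rewrite (@sum_nat_mask R _ _ _ _ hi2m); case: ifP => _; first by [].
by rewrite big1.
Qed.

Lemma sum_pairs_ext G1 G2 :
  (forall i j, (i < j < m)%N -> G1 i j = G2 i j) -> sum_pairs G1 = sum_pairs G2.
Proof.
move=> eqG; rewrite /sum_pairs; apply: eq_big_nat => i /andP [_ im].
apply: eq_big_nat => j /andP [ij jm].
by apply: eqG; rewrite ij.
Qed.

Lemma sum_pairsD G1 G2 : sum_pairs (fun i j => G1 i j + G2 i j) = sum_pairs G1 + sum_pairs G2.
Proof. by rewrite /sum_pairs -big_split; apply: eq_bigr => i _; rewrite big_split. Qed.

Lemma arc_separates_ordered i j a b : (i < j)%N -> (a < b)%N ->
  arc_separates i j a b = ((i < a) && (a <= j < b))%N || ((a <= i < b) && (b <= j))%N.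
Proof.
move=> ij ab; rewrite /arc_separates /in_arc.
by case: (ltnP i a) => ia; case: (leqP a j) => aj; case: (ltnP i b) => ib;
  case: (leqP b j) => bj //=; lia.
Qed.

Lemma sum_pairs_arc_separates G a b : (a < b < m)%N ->
  sum_pairs (fun i j => if arc_separates i j a b then G i j else 0) =
  \sum_(0 <= i < a) \sum_(a <= j < b) G i j + \sum_(a <= i < b) \sum_(b <= j < m) G i j.
Proof.
move=> /andP [ab bm]; have bm' := ltnW bm; have am := ltnW (ltn_trans ab bm).
rewrite sum_pairsE (sum_rectE G 0 a am bm') (sum_rectE G a b bm' (leqnn m)).
rewrite -big_split; apply: eq_big_nat => i _; rewrite -big_split.
apply: eq_big_nat => j /andP [_ jm]; rewrite leq0n jm andbT /=.
case Ha: ((i < a) && (a <= j < b))%N; case Hb: ((a <= i < b) && (b <= j))%N;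
  rewrite ?addr0 ?add0r; case: (ltnP i j) => ij //; try lia.
all: by rewrite arc_separates_ordered // Ha Hb.
Qed.

Definition trivial_arc (i j : nat) : bool := (j == i.+1) || ((i == 0) && (j == m.-1))%N.

(* The arc (i, i+1] cuts off the leaf i+1 and the arc (0, m-1] cuts off the leaf 0. *)
Definition isolated (i j x : nat) : bool := if j == i.+1 then x == j else x == 0%N.

Lemma arc_separates_trivial i j a b : (a < m)%N -> (b < m)%N -> a != b ->
  trivial_arc i j -> arc_separates i j a b = isolated i j a || isolated i j b.
Proof.
move=> am bm neq_ab; rewrite /trivial_arc /arc_separates /in_arc /isolated.
case: (eqVneq j i.+1) => [-> _ | _ /= /andP [/eqP -> /eqP ->]].
  have single x : (i < x <= i.+1)%N = (x == i.+1) by apply/idP/eqP; lia.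
  rewrite !single; case: (eqVneq a i.+1) => [eq_a | _]; case: (eqVneq b i.+1) => [eq_b | _] //.
  by move: neq_ab; rewrite eq_a eq_b eqxx.
have inner x : (x < m)%N -> (0 < x <= m.-1)%N = (x != 0%N) by move=> xm; apply/idP/idP; lia.
rewrite !inner //; case: (eqVneq a 0%N) => [eq_a | _]; case: (eqVneq b 0%N) => [eq_b | _] //.
by move: neq_ab; rewrite eq_a eq_b eqxx.
Qed.

End SumPairs.

Section SplitWeights.
Variables (R : realType) (m : nat) (f : nat -> nat -> R).
Hypotheses (f_sym : forall i j, f i j = f j i) (f_diag : forall i, f i i = 0).

(* Twice the length of the edge cutting off the cyclic arc of positions (i, j];
   position [m] is position [0]. *)
Definition split_weight (i j : nat) : R := mixed_diff (fun x y => f x (y %% m)) i j.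

Lemma sum_split_weights (a b : nat) : a != b -> (a < m)%N -> (b < m)%N ->
  sum_pairs m (fun i j => if arc_separates i j a b then split_weight i j else 0) = 2 * f a b.
Proof.
wlog ab : a b / (a < b)%N => [wlog_ab neq_ab am bm | _ am bm].
  case: (ltngtP a b) => [ab | ba | eq_ab]; first exact: wlog_ab.
  - have neq_ba : b != a by rewrite eq_sym.
    rewrite f_sym -(wlog_ab b a) //; apply: sum_pairs_ext => i j _.
    by rewrite /arc_separates eq_sym.
  - by rewrite eq_ab eqxx in neq_ab.
rewrite sum_pairs_arc_separates ?ab // /split_weight.
rewrite (sum_mixed_diff _ (leq0n a) (ltnW ab)) (sum_mixed_diff _ (ltnW ab) (ltnW bm)).
by rewrite modnn !modn_small // !f_diag (f_sym b 0) (f_sym a 0); ring.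
Qed.

Hypothesis f_four_point : forall p q r s,
  (p < q)%N -> (q < r)%N -> (r < s)%N -> (s < m)%N -> four_point f p q r s.

Lemma split_weight_ge0 i j : (i < j)%N -> (j < m)%N -> ~~ trivial_arc m i j ->
  0 <= split_weight i j.
Proof.
rewrite /trivial_arc negb_or => ij jm /andP [nsucc nwrap].
have ij1 : (i.+1 < j)%N by rewrite ltn_neqAle eq_sym nsucc ij.
rewrite /split_weight /mixed_diff (modn_small jm); case: (ltnP j.+1 m) => j1m.
  have /eq_maxrP [_ + _] := f_four_point (ltnSn i) ij1 (ltnSn j) j1m.
  by rewrite (modn_small j1m); lra.
have j1m' : j.+1 = m by apply/eqP; rewrite eqn_leq j1m jm.
have i0 : (0 < i)%N by move: nwrap; rewrite -j1m' /= eqxx andbT lt0n.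
have /eq_maxrP [+ _ _] := f_four_point i0 (ltnSn i) ij1 jm.
by rewrite -j1m' modnn (f_sym i.+1 0) (f_sym i 0); lra.
Qed.

End SplitWeights.

Section LabelPositions.
Variables (n : nat) (L : {set 'I_n}).

Definition pos (x : 'I_n) : nat := index x (enum L).

Definition lab (x0 : 'I_n) (i : nat) : 'I_n := nth x0 (enum L) i.

Lemma sorted_enum_set : sorted (fun x y : 'I_n => (x < y)%N) (enum L).
Proof.
have -> : enum L = [seq x <- enum 'I_n | x \in L] by rewrite enumT.
apply: sorted_filter; first by move=> x y z; apply: ltn_trans.
by have := iota_ltn_sorted 0 n; rewrite -val_enum_ord sorted_map.
Qed.

Lemma pos_lt_card x : x \in L -> (pos x < #|L|)%N.
Proof. by rewrite cardE /pos index_mem mem_enum. Qed.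

Lemma lab_pos x0 x : x \in L -> lab x0 (pos x) = x.
Proof. by move=> xL; rewrite /lab /pos nth_index ?mem_enum. Qed.

Lemma pos_lab x0 i : (i < #|L|)%N -> pos (lab x0 i) = i.
Proof. by rewrite cardE => lt_i; rewrite /pos /lab index_uniq ?enum_uniq. Qed.

Lemma lab_in x0 i : x0 \in L -> lab x0 i \in L.
Proof.
move=> x0L; rewrite /lab; case: (ltnP i (size (enum L))) => [lt_i | ge_i].
  by rewrite -mem_enum mem_nth.
by rewrite nth_default.
Qed.

Lemma lab_ltn x0 i j : (i < j)%N -> (j < #|L|)%N -> (lab x0 i < lab x0 j)%N.
Proof.
move=> ij; rewrite cardE => lt_j.
apply: (sorted_ltn_nth _ _ sorted_enum_set); rewrite ?inE //.
  by move=> x y z; apply: ltn_trans.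
exact: ltn_trans lt_j.
Qed.

Lemma pos_ltn x y : x \in L -> y \in L -> (pos x < pos y)%N = (x < y)%N.
Proof.
move=> xL yL; have xm := pos_lt_card xL; have ym := pos_lt_card yL.
case: (ltngtP (pos x) (pos y)) => [lt_xy | lt_yx | eq_xy].
- by have := lab_ltn x lt_xy ym; rewrite !lab_pos.
- by have := lab_ltn x lt_yx xm; rewrite !lab_pos // => /ltnW; rewrite leqNgt => /negbTE.
- by have := congr1 (lab x) eq_xy; rewrite !lab_pos // => ->; rewrite ltnn.
Qed.

End LabelPositions.

Section PlanarReconstruction.
Variables (R : realType) (n : nat) (L : {set 'I_n}) (d : 'I_n -> 'I_n -> R) (x0 : 'I_n).
Hypothesis x0L : x0 \in L.
Hypothesis d_sym : forall a b, a \in L -> b \in L -> d a b = d b a.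
Hypothesis d_four_point : forall p q r s : 'I_n, (p < q)%N -> (q < r)%N -> (r < s)%N ->
  p \in L -> q \in L -> r \in L -> s \in L -> four_point d p q r s.

Local Notation m := #|L|.
Local Notation pos := (pos L).
Local Notation lab := (lab L x0).

Definition label_dist (i j : nat) : R := if i == j then 0 else d (lab i) (lab j).

Local Notation w := (split_weight m label_dist).

Lemma label_dist_sym i j : label_dist i j = label_dist j i.
Proof. by rewrite /label_dist eq_sym; case: eqP => // _; apply: d_sym; apply: lab_in. Qed.

Lemma label_dist_diag i : label_dist i i = 0.
Proof. by rewrite /label_dist eqxx. Qed.

Lemma label_dist_four_point p q r s : (p < q)%N -> (q < r)%N -> (r < s)%N -> (s < m)%N ->
  four_point label_dist p q r s.
Proof.
move=> pq qr rs sm; rewrite /four_point /label_dist !ltn_eqF //; try lia.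
by apply: d_four_point; rewrite ?lab_in //; apply: lab_ltn => //; lia.
Qed.

Lemma label_dist_pos a b : a \in L -> b \in L -> a != b ->
  d a b = label_dist (pos a) (pos b).
Proof.
move=> aL bL neq_ab; rewrite /label_dist !lab_pos //.
by case: eqP => // /(congr1 lab); rewrite !lab_pos // => eq_ab; rewrite eq_ab eqxx in neq_ab.
Qed.

Definition arc_set (i j : nat) : {set 'I_n} := [set x in L | in_arc i j (pos x)].

Lemma mem_arc_set i j x : x \in L -> (x \in arc_set i j) = in_arc i j (pos x).
Proof. by move=> xL; rewrite inE xL. Qed.

Lemma lab_in_arc_set i j k : (k < m)%N -> (lab k \in arc_set i j) = in_arc i j k.
Proof. by move=> km; rewrite mem_arc_set ?lab_in // pos_lab. Qed.

Lemma arc_set_planar i j : planar_split L (arc_set i j).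
Proof.
apply/existsPn => a; apply/existsPn => b; apply/existsPn => c; apply/existsPn => e.
apply/negP => /and5P [ab bc ce /and4P [aL bL cL eL] /orP alt].
rewrite -(pos_ltn aL bL) -(pos_ltn bL cL) -(pos_ltn cL eL) in ab bc ce.
by move: alt; rewrite !mem_arc_set // /in_arc => -[] /and4P [? ? ? ?]; lia.
Qed.

Lemma arc_set_card i j : (i < j)%N -> (j < m)%N -> ~~ trivial_arc m i j ->
  (1 < #|arc_set i j|)%N /\ (1 < #|L :\: arc_set i j|)%N.
Proof.
rewrite /trivial_arc negb_or => ij jm /andP [nsucc nwrap].
have ij1 : (i.+1 < j)%N by rewrite ltn_neqAle eq_sym nsucc ij.
have lab_inj k l : (k < m)%N -> (l < m)%N -> k != l -> lab k != lab l.
  by move=> km lm; apply: contraNN => /eqP /(congr1 pos); rewrite !pos_lab // => ->.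
have inD k : (k < m)%N -> (lab k \in L :\: arc_set i j) = ~~ in_arc i j k.
  by move=> km; rewrite in_setD lab_in_arc_set // lab_in // andbT.
split; apply/card_gt1P.
  exists (lab j.-1), (lab j); rewrite !lab_in_arc_set /in_arc; try lia.
  by split; [lia | lia | apply: lab_inj; lia].
case: (eqVneq i 0%N) => [i0 | i0].
  have jm1 : j != m.-1 by move: nwrap; rewrite i0.
  exists (lab 0), (lab m.-1); rewrite !inD /in_arc; try lia.
  by split; [lia | lia | apply: lab_inj; lia].
exists (lab 0), (lab i); rewrite !inD /in_arc; try lia.
by split; [lia | lia | apply: lab_inj; lia].
Qed.

Definition arc_pairs : seq (nat * nat) :=
  [seq (i, j) | i <- index_iota 0 m, j <- index_iota i.+1 m].

Definition keep_arc (ij : nat * nat) : bool := ~~ trivial_arc m ij.1 ij.2 && (0 < w ij.1 ij.2).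

Definition split_edges : seq ({set 'I_n} * R) :=
  [seq (arc_set ij.1 ij.2, w ij.1 ij.2 / 2) | ij <- arc_pairs & keep_arc ij].

Definition leaf_len (x : 'I_n) : R :=
  sum_pairs m (fun i j => if trivial_arc m i j && isolated i j (pos x) then w i j else 0) / 2.

Lemma mem_split_edges e : e \in split_edges -> exists i j,
  [/\ e = (arc_set i j, w i j / 2), (i < j)%N, (j < m)%N, ~~ trivial_arc m i j & 0 < w i j].
Proof.
case/mapP => -[i j]; rewrite mem_filter => /andP [keep_ij /allpairsPdep ij_in] ->.
case: ij_in keep_ij => [i' [j' [i'_in j'_in [-> ->]]]] /andP [ntriv wpos].
by exists i', j'; move: i'_in j'_in; rewrite !mem_index_iota => /andP [_ ?] /andP [? ?].
Qed.

Lemma arc_in_split_edges i j : (i < j)%N -> (j < m)%N -> ~~ trivial_arc m i j -> 0 < w i j ->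
  (arc_set i j, w i j / 2) \in split_edges.
Proof.
move=> ij jm ntriv wpos; apply/mapP; exists (i, j) => //.
rewrite mem_filter /keep_arc ntriv wpos /=; apply/allpairsPdep.
by exists i, j; rewrite !mem_index_iota ij jm (ltn_trans ij jm).
Qed.

Lemma sum_edge_dist_split_edges a b : a \in L -> b \in L ->
  \sum_(e <- split_edges) edge_dist e a b =
  sum_pairs m (fun i j => if keep_arc (i, j) && arc_separates i j (pos a) (pos b)
                          then w i j else 0) / 2.
Proof.
move=> aL bL; rewrite big_map big_filter big_mkcond big_allpairs_dep /sum_pairs mulr_suml.
apply: eq_bigr => i _; rewrite mulr_suml; apply: eq_bigr => j _ /=.
rewrite /edge_dist /= !mem_arc_set // /arc_separates.
by case: (keep_arc (i, j)); case: (_ != _); rewrite ?mul0r.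
Qed.

Lemma split_edges_metric a b : a \in L -> b \in L -> a != b ->
  d a b = tree_metric split_edges leaf_len a b.
Proof.
move=> aL bL neq_ab; have am := pos_lt_card aL; have bm := pos_lt_card bL.
have neq_pos : pos a != pos b.
  by apply: contraNN neq_ab => /eqP /(congr1 lab); rewrite !lab_pos // => ->.
rewrite tree_metricE // sum_edge_dist_split_edges // /leaf_len -!mulrDl -!sum_pairsD.
have := sum_split_weights label_dist_sym label_dist_diag neq_pos am bm.
rewrite label_dist_pos //.
suff -> : sum_pairs m (fun i j => if arc_separates i j (pos a) (pos b) then w i j else 0) =
  sum_pairs m (fun i j => (if trivial_arc m i j && isolated i j (pos a) then w i j else 0) +
    (if trivial_arc m i j && isolated i j (pos b) then w i j else 0) +
    (if keep_arc (i, j) && arc_separates i j (pos a) (pos b) then w i j else 0)) by lra.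
apply: sum_pairs_ext => i j /andP [ij jm]; rewrite /keep_arc /=.
case: (boolP (trivial_arc m i j)) => [triv | ntriv] /=.
  rewrite addr0 (arc_separates_trivial am bm neq_pos triv).
  have excl : ~~ (isolated i j (pos a) && isolated i j (pos b)).
    by rewrite /isolated; case: ifP => _; apply: contraNN neq_pos => /andP [/eqP -> /eqP ->].
  by move: excl; case: (isolated i j (pos a)); case: (isolated i j (pos b)); rewrite ?addr0 ?add0r.
rewrite !add0r; case: (arc_separates i j (pos a) (pos b)); rewrite ?andbF ?andbT //.
have := split_weight_ge0 label_dist_sym label_dist_four_point ij jm ntriv.
by rewrite le0r => /orP [/eqP -> | ->]; rewrite ?ltxx.
Qed.

Lemma split_edges_planar : {in split_edges, forall e, planar_split L e.1}.
Proof. by move=> e /mem_split_edges [i [j [-> _ _ _ _]]]; apply: arc_set_planar. Qed.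

Lemma split_edges_nonneg : {in split_edges, forall e, 0 <= e.2}.
Proof. by move=> e /mem_split_edges [i [j [-> _ _ _ wpos]]] /=; lra. Qed.

Lemma split_edges_noncrossing i j i' j' : (i < i')%N -> (i' < j)%N -> (j < j')%N ->
  (j' < m)%N -> ~~ trivial_arc m i j -> ~~ trivial_arc m i' j' -> 0 < w i j -> 0 < w i' j' ->
  False.
Proof.
move=> ii' i'j jj' j'm ntriv ntriv' wpos wpos'.
have i'_gt0 : (0 < i')%N by apply: leq_ltn_trans ii'.
have lab_L k : lab k \in L by apply: lab_in.
have lab_lt k l : (k < l)%N -> (l < m)%N -> (lab k < lab l)%N by apply: lab_ltn.
have pq := lab_lt _ _ i'_gt0 (ltn_trans i'j (ltn_trans jj' j'm)).
have qr := lab_lt _ _ i'j (ltn_trans jj' j'm).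
have rs := lab_lt _ _ jj' j'm.
have pr := ltn_trans pq qr; have qs := ltn_trans qr rs; have ps := ltn_trans pr rs.
have fp : four_point (tree_metric split_edges leaf_len) (lab 0) (lab i') (lab j) (lab j').
  have := d_four_point pq qr rs (lab_L 0) (lab_L i') (lab_L j) (lab_L j').
  by rewrite /four_point !split_edges_metric ?lab_L ?ord_ltn_neq.
have ij := ltn_trans ii' i'j; have i'j' := ltn_trans i'j jj'.
(* The crossing arcs split the quartet of positions 0 < i' < j < j' in the two
   different ways, so both quartet weights are positive. *)
have splitA : splits_quartet (arc_set i' j') (lab 0) (lab i') (lab j) (lab j').
  by rewrite /splits_quartet !lab_in_arc_set /in_arc ?ltn0 ?ltnn ?i'j ?(ltnW jj') ?i'j' ?leqnn;
    lia.
have splitB : splits_quartet (arc_set i j) (lab i') (lab j) (lab j') (lab 0).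
  by rewrite /splits_quartet !lab_in_arc_set /in_arc ?ltn0 ?ii' ?(ltnW i'j) ?ij ?leqnn
    ?(leqNgt j' j) ?jj' //; lia.
have geA := quartet_weight_ge_edge split_edges_nonneg
  (arc_in_split_edges i'j' j'm ntriv' wpos') splitA.
have geB := quartet_weight_ge_edge split_edges_nonneg
  (arc_in_split_edges ij (ltn_trans jj' j'm) ntriv wpos) splitB.
have := four_point_quartet_weight pq qr rs (lab_L 0) (lab_L i') (lab_L j) (lab_L j')
  split_edges_planar fp.
by move: geA geB => /= geA geB [] eq0; lra.
Qed.

Lemma split_edges_compatible : {in split_edges &, forall e f, compatible_splits L e.1 f.1}.
Proof.
move=> e f /mem_split_edges [i [j [-> ij jm ntriv wpos]]].
move=> /mem_split_edges [i' [j' [-> ij' jm' ntriv' wpos']]] /=.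
case: (boolP ((j <= i') || (j' <= i))%N) => [disj | ndisj].
  apply/or4P/Or41/eqP/setP => x; rewrite !inE; case: (x \in L) => //=.
  by rewrite /in_arc; apply/negbTE; lia.
case: (boolP ((i <= i') && (j' <= j))%N) => [nest | nnest].
  apply/or4P/Or43/eqP/setP => x; rewrite !inE; case: (x \in L) => //=.
  by rewrite /in_arc; apply/negbTE; lia.
case: (boolP ((i' <= i) && (j <= j'))%N) => [nest | nnest'].
  apply/or4P/Or42/eqP/setP => x; rewrite !inE; case: (x \in L) => //=.
  by rewrite /in_arc; apply/negbTE; lia.
exfalso; case: (ltnP i i') => ii'.
  by apply: (split_edges_noncrossing (i := i) (j := j) (i' := i') (j' := j')) => //; lia.
by apply: (split_edges_noncrossing (i := i') (j := j') (i' := i) (j' := j)) => //; lia.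
Qed.

Lemma split_edges_planar_diagram_metric : planar_diagram_metric L d.
Proof.
exists split_edges, leaf_len; split; last exact: split_edges_metric.
split; last exact: split_edges_compatible.
move=> e /mem_split_edges [i [j [-> ij jm ntriv wpos]]] /=.
have [card_arc card_co] := arc_set_card ij jm ntriv.
split=> //; [ | exact: arc_set_planar | lra].
by apply/subsetP => x; rewrite inE => /andP [].
Qed.

End PlanarReconstruction.

Lemma four_point_planar_diagram_metric (R : realType) n (L : {set 'I_n})
    (d : 'I_n -> 'I_n -> R) :
  (forall a b, a \in L -> b \in L -> d a b = d b a) ->
  (forall p q r s : 'I_n, (p < q)%N -> (q < r)%N -> (r < s)%N ->
     p \in L -> q \in L -> r \in L -> s \in L -> four_point d p q r s) ->
  planar_diagram_metric L d.
Proof.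
move=> d_sym d_four_point; case: (set_0Vmem L) => [-> | [x0 x0L]].
  by exists [::], (fun=> 0); split=> [| a]; rewrite ?inE //; split=> e.
exact: split_edges_planar_diagram_metric x0L d_sym d_four_point.
Qed.

Lemma setC_U2 (T : finType) (S : {set T}) x y u v :
  u \notin x |: (y |: S) -> v \notin x |: (y |: S) ->
  ~: (x |: (y |: S)) = u |: (v |: ~: (x |: (y |: (u |: (v |: S))))).
Proof.
move=> uS vS; apply/setP => z; rewrite !inE.
case: (eqVneq z u) => [-> | _]; first by move: uS; rewrite !inE.
by case: (eqVneq z v) => [-> | _] //; move: vS; rewrite !inE.
Qed.

Section ComplementArray.
Variables (R : realType) (n : nat).
Implicit Types (X Y V W pi : tensor R n) (S K : {set 'I_n}) (p q r s : 'I_n).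

Definition tensor_compl X : tensor R n := fun K => X (~: K).

Lemma card_setC_ord K : #|~: K| = (n - #|K|)%N.
Proof. by rewrite cardsCs setCK card_ord. Qed.

Lemma compl_diagram_four_point k1 k2 pi S p q r s :
  (k1 + k2 = n)%N -> is_array k1 pi -> #|S| = (k2 - 2)%N -> (2 <= k2)%N ->
  (p < q)%N -> (q < r)%N -> (r < s)%N ->
  p \notin S -> q \notin S -> r \notin S -> s \notin S ->
  four_point (fun a b => pi (~: (a |: (b |: S)))) p q r s.
Proof.
move=> sum_k [_ [D [diagD piD]]] cardS k2_ge2 pq qr rs pS qS rS sS.
have pr := ltn_trans pq qr; have qs := ltn_trans qr rs; have ps := ltn_trans pr rs.
have uniq_pqrs : uniq [:: p; q; r; s] by rewrite /= !inE !negb_or !ord_ltn_neq.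
set T := ~: (p |: (q |: (r |: (s |: S)))).
have memU4 (a b c e z : 'I_n) :
    (z \in a |: (b |: (c |: (e |: S)))) = (z \in [:: a; b; c; e]) || (z \in S).
  by rewrite !inE !orbA.
have cardT : #|T| = (k1 - 2)%N.
  rewrite card_setC_ord !cardsU1 !inE !negb_or !ord_ltn_neq // pS qS rS sS cardS /=; lia.
(* N \ ({x,y} u S) = {u,v} u T: the dual diagram sees the complementary pair in [D T]. *)
have compl_pair (x y u v : 'I_n) : [:: x; y; u; v] =i [:: p; q; r; s] ->
    pi (~: (x |: (y |: S))) = D T u v.
  move=> perm_xyuv.
  have : uniq [:: x; y; u; v] by rewrite (uniq_size_uniq uniq_pqrs) // => z; rewrite perm_xyuv.
  have notS z : z \in [:: x; y; u; v] -> z \notin S.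
    by rewrite perm_xyuv !inE => /or4P [] /eqP ->.
  have eqT : ~: (x |: (y |: (u |: (v |: S)))) = T.
    by apply/setP => z; rewrite !in_setC !memU4 perm_xyuv.
  have [uS vS] : u \notin S /\ v \notin S by split; apply: notS; rewrite !inE eqxx ?orbT.
  rewrite /= !inE !negb_or => /and4P [/and3P [_ xu xv] /andP [yu yv] uv _].
  rewrite (@setC_U2 _ _ x y u v) ?eqT.
  - by apply: piD; rewrite // -eqT !in_setC !memU4 !inE eqxx ?orbT.
  - by rewrite !inE !negb_or ![u == _]eq_sym xu yu.
  - by rewrite !inE !negb_or ![v == _]eq_sym xv yv.
have [[Epr Eqs] [Epq Ers] [Eps Eqr]] :
    [/\ pi (~: (p |: (r |: S))) = D T q s /\ pi (~: (q |: (s |: S))) = D T p r,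
         pi (~: (p |: (q |: S))) = D T r s /\ pi (~: (r |: (s |: S))) = D T p q
       & pi (~: (p |: (s |: S))) = D T q r /\ pi (~: (q |: (r |: S))) = D T p s].
  by do !split; apply: compl_pair => z; rewrite !inE;
    case: (z == p); case: (z == q); case: (z == r); case: (z == s).
have inCT z : z \in [:: p; q; r; s] -> z \in ~: T by rewrite setCK memU4 => ->.
have [pP qP rP sP] : [/\ p \in [:: p; q; r; s], q \in [:: p; q; r; s],
    r \in [:: p; q; r; s] & s \in [:: p; q; r; s]] by rewrite !inE !eqxx ?orbT.
have := planar_diagram_metric_four_point (diagD T cardT) pq qr rs
  (inCT p pP) (inCT q qP) (inCT r rP) (inCT s sP).
rewrite /four_point Epr Eqs Epq Ers Eps Eqr.
by rewrite [D T q s + _]addrC [D T r s + _]addrC [D T q r + _]addrC.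
Qed.

Lemma is_array_compl k1 k2 pi : (k1 + k2 = n)%N -> (2 <= k2)%N ->
  is_array k1 pi -> is_array k2 (tensor_compl pi).
Proof.
move=> sum_k k2_ge2 arr; have [/andP [k1_ge2 _] _] := arr.
split; first by apply/andP; split => //; lia.
exists (fun S a b => pi (~: (a |: (b |: S)))); split=> // S cardS.
apply: four_point_planar_diagram_metric => [a b _ _ | p q r s pq qr rs]; first by rewrite setUCA.
rewrite !inE => pS qS rS sS.
exact: compl_diagram_four_point sum_k arr cardS k2_ge2 pq qr rs pS qS rS sS.
Qed.

End ComplementArray.

Section ArrayEquivalence.
Variables (R : realType) (n : nat).
Implicit Types (X Y U V W : tensor R n).

Lemma array_equiv_refl k X : array_equiv k X X.
Proof. by exists (fun=> 0) => J _; rewrite big1 ?addr0. Qed.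

Lemma array_equiv_sym k X Y : array_equiv k X Y -> array_equiv k Y X.
Proof. by move=> [w eqw]; exists (fun i => - w i) => J cardJ; rewrite eqw // sumrN addrK. Qed.

Lemma array_equiv_trans k X Y U : array_equiv k X Y -> array_equiv k Y U -> array_equiv k X U.
Proof.
move=> [w eqw] [w' eqw']; exists (fun i => w i + w' i) => J cardJ.
by rewrite eqw' // eqw // big_split addrA.
Qed.

Lemma eq_array_equiv k X X' Y Y' :
  (forall J : {set 'I_n}, #|J| = k -> X J = X' J) ->
  (forall J : {set 'I_n}, #|J| = k -> Y J = Y' J) ->
  array_equiv k X Y -> array_equiv k X' Y'.
Proof. by move=> eqX eqY [w eqw]; exists w => J cardJ; rewrite -eqX // -eqY // eqw. Qed.

Lemma array_equiv_lincomb k (x y : R) X1 Y1 X2 Y2 :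
  array_equiv k X1 Y1 -> array_equiv k X2 Y2 ->
  array_equiv k (fun J => x * X1 J + y * X2 J) (fun J => x * Y1 J + y * Y2 J).
Proof.
move=> [w eqw] [w' eqw']; exists (fun i => x * w i + y * w' i) => J cardJ.
by rewrite eqw // eqw' // big_split /= -!mulr_sumr; ring.
Qed.

Lemma array_equiv_compl k1 k2 X Y : (k1 + k2 = n)%N -> (0 < k2)%N ->
  array_equiv k1 X Y -> array_equiv k2 (tensor_compl X) (tensor_compl Y).
Proof.
move=> sum_k k2_gt0 [w eqw].
exists (fun i => (\sum_j w j) / k2%:R - w i) => K cardK.
rewrite /tensor_compl eqw; last by rewrite card_setC_ord cardK; lia.
have split_w : \sum_j w j = \sum_(i in ~: K) w i + \sum_(i in K) w i.
  by rewrite (bigID (mem K)) /= addrC; congr (_ + _); apply: eq_bigl => i; rewrite inE.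
have k2_neq0 : k2%:R != 0 :> R by rewrite pnatr_eq0 -lt0n.
by rewrite sumrB sumr_const cardK -mulr_natr split_w; field.
Qed.

End ArrayEquivalence.

Section KinematicDuality.
Variables (R : realType) (n : nat).
Implicit Types (X V W : tensor R n).

Lemma kinematic_orthogonal_equiv0 k X :
  (forall s, kinematic k s -> \sum_(J : {set 'I_n} | #|J| == k) s J * X J = 0) ->
  array_equiv k (fun=> 0) X.
Proof.
move=> orthX.
pose M : 'M[R]_(n, #|{set 'I_n}|) :=
  \matrix_(i < n, c < #|{set 'I_n}|) (if (#|enum_val c| == k) && (i \in enum_val c) then 1 else 0).
pose x : 'rV[R]_#|{set 'I_n}| :=
  \row_(c < #|{set 'I_n}|) (if #|enum_val c| == k then X (enum_val c) else 0).
have sum_enum (F : {set 'I_n} -> R) : \sum_J F J = \sum_(c < #|{set 'I_n}|) F (enum_val c).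
  by rewrite (reindex (fun c : 'I_#|{set 'I_n}| => enum_val c)) //; apply/onW_bij/enum_val_bij.
(* Kinematic invariants are the vectors killed by the incidence matrix [M], so being
   orthogonal to all of them means lying in the row space of [M]. *)
have x_in_M : (x <= M)%MS.
  rewrite submxE; apply/eqP/rowP => c'; rewrite !mxE.
  pose s J := cokermx M (enum_rank J) c'.
  have kin_s : kinematic k s.
    move=> j; rewrite big_mkcond /= sum_enum.
    have := congr1 (fun A : 'M_(n, _) => A j c') (mulmx_coker M); rewrite !mxE => coker0.
    apply: etrans coker0; apply: eq_bigr => c _; rewrite /s enum_valK !mxE.
    by case: ifP; rewrite ?mul1r ?mul0r.
  have := orthX s kin_s; rewrite big_mkcond /= sum_enum => orth_s.
  apply: etrans orth_s; apply: eq_bigr => c _; rewrite /s enum_valK !mxE.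
  by case: ifP; rewrite ?mul0r // mulrC.
have [D eqD] := submxP x_in_M.
exists (fun i => D 0 i) => J cardJ; rewrite add0r.
have := congr1 (fun A : 'rV_#|{set 'I_n}| => A 0 (enum_rank J)) eqD.
rewrite !mxE enum_rankK cardJ eqxx => ->.
rewrite (bigID (mem J)) /= [X in _ + X]big1 ?addr0 => [|i iJ].
  by apply: eq_bigr => i iJ; rewrite !mxE enum_rankK cardJ eqxx iJ mulr1.
by rewrite !mxE enum_rankK cardJ eqxx (negbTE iJ) mulr0.
Qed.

Lemma sum_card_compl (G : {set 'I_n} -> R) k : (k <= n)%N ->
  \sum_(K : {set 'I_n} | #|K| == (n - k)%N) G K = \sum_(J : {set 'I_n} | #|J| == k) G (~: J).
Proof.
move=> kn; rewrite (reindex_inj (@setC_inj _)) /=; apply: eq_bigl => J.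
rewrite card_setC_ord; have := max_card J; rewrite card_ord => Jn.
by apply/eqP/eqP => [eqJ | ->]; first by rewrite -(subKn Jn) eqJ subKn.
Qed.

Lemma dual_array_equiv k V W : (k <= n)%N -> dual_array k V W ->
  array_equiv k (tensor_compl W) V.
Proof.
move=> kn dualVW.
have [w eqw] : array_equiv k (fun=> 0) (fun J => V J - W (~: J)).
  apply: kinematic_orthogonal_equiv0 => s kin_s.
  under eq_bigr do rewrite mulrBr.
  rewrite sumrB dualVW // sum_card_compl //.
  by apply/eqP; rewrite subr_eq0; apply/eqP; apply: eq_bigr => J _; rewrite setCK.
by exists w => J cardJ; have := eqw J cardJ; rewrite /tensor_compl add0r => <-; ring.
Qed.

Lemma dual_array_compl k W : (k <= n)%N -> dual_array k (tensor_compl W) W.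
Proof. by move=> kn s _; rewrite sum_card_compl //; apply: eq_bigr => J _; rewrite setCK. Qed.

End KinematicDuality.

Section DualCliques.
Variables (R : realType) (n : nat).
Implicit Types (V W : tensor R n) (C : tensor R n -> Prop).

Lemma dual_array_equiv_compl k V W : (k < n)%N -> dual_array k V W ->
  array_equiv (n - k) (tensor_compl V) W.
Proof.
move=> kn dualVW; apply: array_equiv_sym.
apply: eq_array_equiv (array_equiv_compl (subnKC (ltnW kn)) _ (dual_array_equiv (ltnW kn) dualVW)).
- by move=> K _; rewrite /tensor_compl setCK.
- by [].
- by rewrite subn_gt0.
Qed.

Lemma one_param_compl k1 k2 W : (k1 + k2 = n)%N -> (2 <= k2)%N ->
  one_param k1 W -> one_param k2 (tensor_compl W).
Proof. by move=> sum_k k2_ge2 opW x x_gt0; apply: is_array_compl sum_k k2_ge2 (opW x x_gt0). Qed.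

Lemma compatible_arrays_sym k V W : compatible_arrays k V W -> compatible_arrays k W V.
Proof.
move=> compatVW x y x_gt0 y_gt0; have [pi [arr_pi eqv_pi]] := compatVW y x y_gt0 x_gt0.
by exists pi; split=> //; apply: eq_array_equiv eqv_pi => // J _; rewrite addrC.
Qed.

Lemma compatible_arrays_dual k1 k2 V1 V2 W1 W2 : (k1 + k2 = n)%N -> (2 <= k2)%N ->
  compatible_arrays k1 V1 V2 ->
  array_equiv k2 (tensor_compl V1) W1 -> array_equiv k2 (tensor_compl V2) W2 ->
  compatible_arrays k2 W1 W2.
Proof.
move=> sum_k k2_ge2 compatV eqv1 eqv2 x y x_gt0 y_gt0.
have [pi [arr_pi eqv_pi]] := compatV x y x_gt0 y_gt0.
exists (tensor_compl pi); split; first exact: is_array_compl arr_pi.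
apply: array_equiv_trans (array_equiv_compl sum_k _ eqv_pi); last exact: leq_trans k2_ge2.
by apply: array_equiv_lincomb; apply: array_equiv_sym.
Qed.

Lemma clique_compl_union k C C' : (2 <= k)%N -> (2 <= n - k)%N ->
  clique k C -> clique (n - k) C' -> (forall V, C V -> exists2 W, C' W & dual_array k V W) ->
  clique k (fun U => C U \/ exists2 W, C' W & U = tensor_compl W).
Proof.
move=> k_ge2 nk_ge2 [C_op C_compat] [C'_op C'_compat] C_dual.
have kn : (k <= n)%N by apply: ltnW; rewrite -subn_gt0; apply: leq_trans nk_ge2.
have sum_k : (n - k + k = n)%N by rewrite subnK.
have mixed U W : C U -> C' W -> compatible_arrays k U (tensor_compl W).
  move=> CU C'W; have [W' C'W' dualUW'] := C_dual U CU.
  apply: compatible_arrays_dual sum_k k_ge2 (C'_compat _ _ C'W' C'W) _ (array_equiv_refl _ _).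
  exact: dual_array_equiv.
split=> [U [/C_op // | [W /C'_op opW ->]] | U1 U2].
  exact: one_param_compl sum_k k_ge2 opW.
move=> [CU1 | [W1 C'W1 ->]] [CU2 | [W2 C'W2 ->]].
- exact: C_compat.
- exact: mixed.
- exact/compatible_arrays_sym/mixed.
- apply: compatible_arrays_dual sum_k k_ge2 (C'_compat _ _ C'W1 C'W2) _ _;
    exact: array_equiv_refl.
Qed.

End DualCliques.

Theorem theorem3p2 (R : realType) (n k : nat) (Hk2 : (2 <= k)%N) (Hkn : (k < n)%N)
  (C : tensor R n -> Prop) :
  max_clique k C ->
  (forall V, C V -> exists W, one_param (n - k) W /\ dual_array k V W) ->
  max_clique (n - k)
    (fun W : tensor R n => one_param (n - k) W /\ exists V, C V /\ dual_array k V W).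
Proof.
move=> [C_clique C_max] C_dual.
case: (ltnP (n - k) 2) => [nk_lt2 | nk_ge2].
  have no_op W : ~ one_param (n - k) W.
    by move=> /(_ 1 ltr01) [/andP [+ _] _]; rewrite leqNgt nk_lt2.
  by split; [split=> [W [] | W1 W2 [] /no_op] | move=> C' [C'_op _] _ W /C'_op /no_op].
split; first split=> [W [] // | W1 W2 [_ [V1 [CV1 dual1]]] [_ [V2 [CV2 dual2]]]].
  apply: compatible_arrays_dual (subnKC (ltnW Hkn)) nk_ge2 _ _ _.
  - exact: C_clique.2 _ _ CV1 CV2.
  - exact: dual_array_equiv_compl.
  - exact: dual_array_equiv_compl.
move=> C' C'_clique sub W C'W; split; first exact: C'_clique.1.
exists (tensor_compl W); split; last exact: dual_array_compl (ltnW Hkn).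
apply: (C_max _ (clique_compl_union Hk2 nk_ge2 C_clique C'_clique _)); last by right; exists W.
- move=> V CV; have [W' [opW' dualVW']] := C_dual V CV.
  by exists W' => //; apply: sub; split=> //; exists V.
- by move=> V CV; left.
Qed.
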